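(* Let $p$ be a binary word of length $l$ with exactly $3$ runs whose second run has size at least $2$. For every $n\ge l$, every $p$-optimal binary word of length $n$ has exactly $3$ runs.
   Context: $c_p(w)$ is the number of occurrences of $p$ as a (not necessarily consecutive) subsequence of $w$. $M_{n,p}=\max\{c_p(w): w\in\{0,1\}^n\}$; a binary word $w$ of length $n$ is $p$-optimal if $c_p(w)=M_{n,p}$. A run is a maximal block of consecutive equal letters; its size is its length. *)

From mathcomp Require Import all_boot.
Set Implicit Arguments. Unset Strict Implicit. Unset Printing Implicit Defensive.

(* Binary words are sequences of booleans (false = 0, true = 1). *)

(* c_p(w): number of occurrences of p as a (not necessarily consecutive)
   subsequence of w, i.e. the number of index sets of w (encoded as
   selection masks of length |w|) selecting exactly p. *)
Definition occ (p w : seq bool) : nat :=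
  #|[set m : (size w).-tuple bool | mask m w == p]|.

Definition Mnp (n : nat) (p : seq bool) : nat :=
  \max_(w : n.-tuple bool) occ p w.

Definition optimal (p w : seq bool) : Prop := occ p w = Mnp (size w) p.

Fixpoint runs_aux (a : bool) (k : nat) (w : seq bool) : seq nat :=
  match w with
  | [::] => [:: k]
  | b :: w' => if b == a then runs_aux a k.+1 w' else k :: runs_aux b 1 w'
  end.

Definition runs (w : seq bool) : seq nat :=
  match w with
  | [::] => [::]
  | a :: w' => runs_aux a 1 w'
  end.

Definition nruns (w : seq bool) : nat := size (runs w).

Example runs_test : runs [:: true; true; false; false; false; true] = [:: 2; 3; 1].
Proof. by []. Qed.

From mathcomp Require Import all_boot zify.

Set Implicit Arguments.
Unset Strict Implicit.
Unset Printing Implicit Defensive.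

(* Complementing letters preserves occurrence counts, so
   we may assume p = 0^i 1^(m+1) 0^k with i, k >= 1 and m >= 1.

   Classifying an occurrence of p in 0^A w by the letter of w matched to the
   first 1 of p gives, for every word w,
       cnt p (0^A w) <= peak i k (A + zeros w) * C(ones w, m+1),
   where [peak i k N] is the largest value of C(x,i) C(N-x,k) over x <= N.
   The three-block word 0^x 1^(ones w) 0^(zeros w - x) attains this bound,
   hence so does every optimal w.  Writing w = 0^x 1 v, the bound is strict
   as soon as 01 is a subsequence of v: then cnt (1^m 0^k) v is strictly below
   C(zeros v,k) C(ones v,m), which needs m >= 1.  So v = 1^a 0^b, and since
   p does occur in w, x and b are positive: w has exactly three runs. *)

Local Notation zeros u := (count_mem false u).
Local Notation ones u := (count_mem true u).

Lemma zeros_add_ones w : zeros w + ones w = size w.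
Proof. by elim: w => [|[] w IH] //=; rewrite ?add0n ?add1n ?addnS ?addSn IH. Qed.

Fixpoint cnt (p w : seq bool) : nat :=
  match w with
  | [::] => (p == [::])
  | y :: w' => cnt p w' + (if p is x :: p' then (x == y) * cnt p' w' else 0)
  end.

Lemma cnt_nil w : cnt [::] w = 1.
Proof. by elim: w => //= y w ->. Qed.

Lemma card_tuple_cons n (P : pred (n.+1.-tuple bool)) :
  #|[set m | P m]| = #|[set t : n.-tuple bool | P [tuple of true :: t]]|
                   + #|[set t : n.-tuple bool | P [tuple of false :: t]]|.
Proof.
rewrite !cardsE -!sum1_card.
pose cons_tuple (xt : bool * n.-tuple bool) : n.+1.-tuple bool := [tuple of xt.1 :: xt.2].
rewrite (reindex cons_tuple) /=; last first.
  exists (fun m : n.+1.-tuple bool => (thead m, [tuple of behead m])).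
    by move=> [x t] _; congr pair; apply: val_inj.
  by move=> m _; apply: val_inj; rewrite /= [in RHS](tuple_eta m).
rewrite -(pair_big_dep predT (fun x t => P (cons_tuple (x, t))) (fun _ _ => 1)) /=.
by rewrite big_bool.
Qed.

Lemma occ_cnt p w : occ p w = cnt p w.
Proof.
elim: w p => [|y w IH] p.
  case: p => [|x p].
    rewrite /occ (_ : [set _ | _] = setT) ?cardsT ?card_tuple //.
    by apply/setP => m; rewrite !inE; case: m => [[]].
  rewrite /occ (_ : [set _ | _] = set0) ?cards0 //.
  by apply/setP => m; rewrite !inE; case: m => [[]].
rewrite /occ card_tuple_cons /= addnC -/(occ p w) IH; congr addn.
case: p => [|x p].
  by apply/eqP; rewrite cards_eq0; apply/eqP/setP => t; rewrite !inE.
rewrite -IH /occ; case: (eqVneq x y) => [->|nxy] /=.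
  by rewrite mul1n; apply: eq_card => t; rewrite !inE eqseq_cons eqxx.
apply/eqP; rewrite mul0n cards_eq0; apply/eqP/setP => t.
by rewrite !inE eqseq_cons eq_sym (negbTE nxy).
Qed.

Definition maximal (p w : seq bool) : Prop :=
  forall v, size v = size w -> cnt p v <= cnt p w.

Lemma optimal_maximal p w : optimal p w -> maximal p w.
Proof.
rewrite /optimal /maximal occ_cnt => -> v size_v; rewrite -occ_cnt.
have size_vw : size v == size w by rewrite size_v.
exact: (@leq_bigmax _ (fun t : (size w).-tuple bool => occ p t) (Tuple size_vw)).
Qed.

Lemma cnt_negb p w : cnt (map negb p) (map negb w) = cnt p w.
Proof.
elim: w p => [|y w IH] [|x p] //=; rewrite ?IH //.
- by rewrite !cnt_nil.
- by rewrite (IH (x :: p)); case: x; case: y.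
Qed.

Lemma maximal_negb p w : maximal p w -> maximal (map negb p) (map negb w).
Proof.
move=> w_max v; rewrite size_map => size_v.
rewrite -{1}(mapK negbK v) !cnt_negb; apply: w_max.
by rewrite size_map.
Qed.

Lemma cnt_nseq c k u : cnt (nseq k c) u = 'C(count_mem c u, k).
Proof.
elim: u k => [|y u IH] [|k] /=; rewrite ?cnt_nil ?bin0 //.
have IHk1 := IH k.+1; have IHk := IH k; move: IHk1 IHk => /=; clear IH.
by case: y; case: c => /= -> ->; rewrite ?mul1n ?mul0n ?addn0 ?add0n ?add1n ?binS.
Qed.

(* An occurrence of q picks its zeros among the zeros of u and its ones among
   the ones of u. *)
Lemma cnt_count_bound q u : cnt q u <= 'C(zeros u, zeros q) * 'C(ones u, ones q).
Proof.
elim: u q => [|y u IH] [|x q] //=; first by rewrite !bin0 cnt_nil.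
have IHxq := IH (x :: q); have IHq := IH q; move: IHxq IHq => /=.
case: x; case: y => /= IHxq IHq; rewrite ?add0n ?add1n ?mul1n ?mul0n ?addn0.
- by rewrite binS mulnDr leq_add.
- by apply: (leq_trans IHxq); rewrite leq_mul2r leq_bin2l ?orbT.
- by apply: (leq_trans IHxq); rewrite leq_mul2l leq_bin2l ?orbT.
- by rewrite binS mulnDl leq_add.
Qed.

Lemma cnt_count_lt p w : (zeros w < zeros p) || (ones w < ones p) -> cnt p w = 0.
Proof.
move=> lt_count; apply/eqP; rewrite -leqn0.
apply: (leq_trans (cnt_count_bound p w)).
by case/orP: lt_count => /bin_small ->; rewrite ?mul0n ?muln0.
Qed.

Lemma cnt_ones_zeros_le m k v :
  cnt (nseq m true ++ nseq k false) v <= 'C(zeros v, k) * 'C(ones v, m).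
Proof.
have := cnt_count_bound (nseq m true ++ nseq k false) v.
by rewrite !count_cat !count_nseq /= !mul1n !mul0n addn0 add0n.
Qed.

Lemma cnt_catl p u w : cnt p w <= cnt p (u ++ w).
Proof. by elim: u => [|y u IH] //=; apply: (leq_trans IH (leq_addr _ _)). Qed.

Lemma cnt_cat p1 p2 w1 w2 : cnt p1 w1 * cnt p2 w2 <= cnt (p1 ++ p2) (w1 ++ w2).
Proof.
elim: w1 p1 => [|y w1 IH] [|x p1] //=.
- by rewrite mul1n.
- by rewrite cnt_nil mul1n; apply: (cnt_catl p2 (y :: w1) w2).
rewrite mulnDl; apply: leq_add; first exact: (IH (x :: p1)).
by rewrite -mulnA leq_mul2l IH orbT.
Qed.

(* The three-block word c^x (~c)^o c^y; with x, o, y >= 1 these are exactly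
   the words with three runs. *)
Definition block3 (c : bool) (x o y : nat) : seq bool :=
  nseq x c ++ nseq o (~~ c) ++ nseq y c.

Lemma size_block3 c x o y : size (block3 c x o y) = x + o + y.
Proof. by rewrite /block3 !size_cat !size_nseq addnA. Qed.

Lemma block3_negb c x o y : map negb (block3 c x o y) = block3 (~~ c) x o y.
Proof. by rewrite /block3 !map_cat !map_nseq negbK. Qed.

(* Choosing each block of the pattern inside the matching block of the word. *)
Lemma cnt_block3 c i j k x o y :
  'C(x, i) * 'C(o, j) * 'C(y, k) <= cnt (block3 c i j k) (block3 c x o y).
Proof.
rewrite -mulnA; apply: (leq_trans _ (cnt_cat _ _ _ _)); apply: leq_mul.
  by rewrite cnt_nseq count_nseq /= eqxx mul1n.
apply: (leq_trans _ (cnt_cat _ _ _ _)).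
by rewrite !cnt_nseq !count_nseq /= !eqxx !mul1n.
Qed.

Lemma cnt_only_zeros i j k A : 0 < j -> cnt (block3 false i j k) (nseq A false) = 0.
Proof.
move=> j_gt0; rewrite cnt_count_lt //; apply/orP; right.
by rewrite !count_cat !count_nseq /= !mul0n mul1n add0n addn0.
Qed.

(* Effect of inserting one 1 after a prefix 0^A of the word: the new
   occurrences match it with the first 1 of the pattern. *)
Lemma cnt_shift_one i r A w :
  cnt (nseq i false ++ true :: r) (nseq A false ++ true :: w) =
  cnt (nseq i false ++ true :: r) (nseq A false ++ w) + 'C(A, i) * cnt r w.
Proof.
elim: A i => [|A IH] i.
  by case: i => [|i] /=; rewrite ?mul1n ?mul0n ?addn0 // bin0n.
rewrite /= IH; case: i => [|i] /=.
  by rewrite !mul0n !bin0 !addn0.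
by rewrite !mul1n (IH i) binS; lia.
Qed.

Lemma cnt_skip_ones i j k n s : 0 < i ->
  cnt (block3 false i j k) (nseq n true ++ s) = cnt (block3 false i j k) s.
Proof. by case: i => // i _; elim: n => //= n ->; rewrite [_ * _]mul0n addn0. Qed.

Lemma cnt_zeros_then_ones i m k A n : 0 < k ->
  cnt (block3 false i m.+1 k) (nseq A false ++ nseq n true) = 0.
Proof.
move=> k_gt0; elim: n => [|n IH]; first by rewrite cats0 cnt_only_zeros.
rewrite -[block3 false i m.+1 k]/(nseq i false ++ true :: nseq m true ++ nseq k false) in IH *.
rewrite -[nseq n.+1 true]/(true :: nseq n true) cnt_shift_one IH add0n.
by rewrite cnt_count_lt ?muln0 // !count_cat !count_nseq /= mul0n mul1n add0n k_gt0.
Qed.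

(* peak i k N is the best way to split N zeros into i-subsets before and
   k-subsets after a given position. *)
Definition peak i k N := \max_(x < N.+1) ('C(x, i) * 'C(N - x, k)).

Lemma peak_ge i k x N : x <= N -> 'C(x, i) * 'C(N - x, k) <= peak i k N.
Proof.
move=> le_xN.
exact: (@leq_bigmax _ (fun y : 'I_N.+1 => 'C(y, i) * 'C(N - y, k)) (Ordinal (le_xN : x < N.+1))).
Qed.

Lemma peak_attained i k N : exists2 x, x <= N & peak i k N = 'C(x, i) * 'C(N - x, k).
Proof.
have card_pos : 0 < #|'I_N.+1| by rewrite card_ord.
rewrite /peak; have [x ->] := @eq_bigmax _ (fun y : 'I_N.+1 => 'C(y, i) * 'C(N - y, k)) card_pos.
by exists x; first by rewrite -ltnS ltn_ord.
Qed.

Lemma peak_ge_prefix i k A Z : 'C(A, i) * 'C(Z, k) <= peak i k (A + Z).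
Proof. by have := @peak_ge i k A (A + Z) (leq_addr _ _); rewrite addKn. Qed.

Lemma cnt_after_zeros i m k A w :
  cnt (block3 false i m.+1 k) (nseq A false ++ w) <= peak i k (A + zeros w) * 'C(ones w, m.+1).
Proof.
rewrite /block3 /=; elim: w A => [|[] w IH] A /=.
- by rewrite cats0 (cnt_only_zeros _ _ _ (ltn0Sn m)).
- rewrite cnt_shift_one add0n add1n binS mulnDr leq_add //.
  apply: (leq_trans (leq_mul (leqnn _) (cnt_ones_zeros_le m k w))).
  by rewrite mulnA leq_mul2r peak_ge_prefix orbT.
- by rewrite -[false :: w]/(nseq 1 false ++ w) catA -nseqD add0n addnA; apply: IH.
Qed.

Lemma cnt_ones_zeros_lt m k v : subseq [:: false; true] v ->
  m <= ones v -> k <= zeros v -> 0 < m -> 0 < k ->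
  cnt (nseq m true ++ nseq k false) v < 'C(zeros v, k) * 'C(ones v, m).
Proof.
elim: v m => [|y v IH] [|m] //= v01 le_m le_k _ k_gt0.
have ones_gt0 : forall u, subseq [:: false; true] u -> 0 < ones u.
  by move=> u /mem_subseq/(_ true); rewrite !inE orbT -has_pred1 has_count => ->.
case: y v01 le_m le_k => /= v01 le_m le_k; rewrite ?add0n ?add1n in le_m le_k *.
  rewrite !mul1n binS mulnDr [X in _ < X]addnC.
  case: m le_m => [|m] le_m.
    rewrite cnt_nseq bin0 muln1 addnC ltn_add2l.
    by apply: (IH 1) => //; apply: ones_gt0.
  rewrite addnC -addSn leq_add //; first by apply: IH.
  exact: (cnt_ones_zeros_le m.+2).
rewrite (_ : (true == false) * _ = 0) // addn0; clear IH; case: k k_gt0 le_k => [|k] // _ le_k.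
apply: (@leq_trans ('C(zeros v, k.+1) * 'C(ones v, m.+1) + 'C(zeros v, k) * 'C(ones v, m.+1))).
  rewrite -addn1 leq_add //; first exact: (cnt_ones_zeros_le m.+1 k.+1).
  by rewrite muln_gt0 !bin_gt0 -ltnS le_k le_m.
by rewrite binS mulnDl.
Qed.

(* Consequently the main bound is strict for 0^A 1 v when 01 is a
   subsequence of v; this is where the middle run of size >= 2 is used. *)
Lemma cnt_after_zeros_lt i m k A v : subseq [:: false; true] v ->
  0 < peak i k (A + zeros v) -> m <= ones v -> 0 < m -> 0 < k ->
  cnt (block3 false i m.+1 k) (nseq A false ++ true :: v)
    < peak i k (A + zeros v) * 'C((ones v).+1, m.+1).
Proof.
move=> v01 peak_gt0 le_m m_gt0 k_gt0.
rewrite -[block3 false i m.+1 k]/(nseq i false ++ true :: nseq m true ++ nseq k false).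
rewrite cnt_shift_one binS mulnDr -addnS leq_add //; first exact: cnt_after_zeros.
have [prod0|] := posnP ('C(A, i) * 'C(zeros v, k)).
  apply: (@leq_trans 1); last by rewrite muln_gt0 peak_gt0 bin_gt0.
  rewrite ltnS (leq_trans (leq_mul (leqnn _) (cnt_ones_zeros_le m k v))) //.
  by rewrite mulnA prod0.
rewrite muln_gt0 => /andP[CA_gt0 CZ_gt0].
apply: (@leq_trans ('C(A, i) * ('C(zeros v, k) * 'C(ones v, m)))).
  by rewrite ltn_pmul2l // cnt_ones_zeros_lt // -bin_gt0.
by rewrite mulnA leq_mul2r peak_ge_prefix orbT.
Qed.

Lemma split_first_run (c : bool) w :
  exists x r, w = nseq x c ++ r /\ (r = [::] \/ exists v, r = ~~ c :: v).
Proof.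
elim: w => [|y w [x [r [-> r_shape]]]]; first by exists 0, [::]; split => //; left.
case: (eqVneq y c) => [->|y_neq_c]; first by exists x.+1, r.
exists 0, (y :: nseq x c ++ r); split => //; right; exists (nseq x c ++ r).
by clear r_shape; move: y_neq_c; case: y; case: c.
Qed.

Lemma notin_nseq (b : bool) v : b \notin v -> v = nseq (size v) (~~ b).
Proof.
move=> b_notin; apply/all_pred1P/allP => y y_in.
by apply/eqP; case: y b y_in b_notin => [] [] // ->.
Qed.

Lemma no01_shape v : ~~ subseq [:: false; true] v -> exists a b, v = nseq a true ++ nseq b false.
Proof.
elim: v => [|[] v IH] /=; first by exists 0, 0.
  by move=> /IH [a [b ->]]; exists a.+1, b.
by rewrite sub1seq => /notin_nseq ->; exists 0, (size v).+1.
Qed.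

Section MaximalWords.

Variables i m k : nat.
Hypotheses (i_gt0 : 0 < i) (m_gt0 : 0 < m) (k_gt0 : 0 < k).
Local Notation p := (block3 false i m.+1 k).

Variable w : seq bool.
Hypotheses (long_w : size p <= size w) (w_max : maximal p w).

(* Some three-block word of the length of w contains p. *)
Lemma maximal_cnt_gt0 : 0 < cnt p w.
Proof.
have size_v : size (block3 false i (m.+1 + (size w - size p)) k) = size w.
  by move: long_w; rewrite !size_block3; lia.
apply: (leq_trans _ (w_max size_v)); apply: (leq_trans _ (cnt_block3 _ _ _ _ _ _ _)).
by rewrite !muln_gt0 !bin_gt0 !leqnn leq_addr.
Qed.

(* The upper bound [cnt_after_zeros] is attained by the three-block word
   0^x 1^(ones w) 0^(zeros w - x) for the best x, hence by w. *)
Lemma maximal_cnt_peak : cnt p w = peak i k (zeros w) * 'C(ones w, m.+1).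
Proof.
apply/eqP; rewrite eqn_leq (cnt_after_zeros i m k 0 w) /=.
have [x le_x ->] := peak_attained i k (zeros w).
have size_v : size (block3 false x (ones w) (zeros w - x)) = size w.
  by rewrite size_block3 -zeros_add_ones; lia.
apply: (leq_trans _ (w_max size_v)); apply: (leq_trans _ (cnt_block3 _ _ _ _ _ _ _)).
by rewrite mulnAC.
Qed.

(* Write w = 0^x 1 v.  The bound is strict if 01 is a subsequence of v, so
   v = 1^a 0^b; and x = 0 or b = 0 would leave no occurrence of p. *)
Lemma maximal_three_blocks :
  exists x o y, [/\ 0 < x, 0 < o, 0 < y & w = block3 false x o y].
Proof.
have cnt_gt0 := maximal_cnt_gt0; have cnt_peak := maximal_cnt_peak.
have /andP[peak_gt0 ones_ge] : (0 < peak i k (zeros w)) && (m.+1 <= ones w).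
  by rewrite -[m.+1 <= _]bin_gt0 -muln_gt0 -cnt_peak.
have [x [r [w_eq [r_nil|[v r_cons]]]]] := split_first_run false w; subst r; rewrite /= in w_eq.
  by move: ones_ge; rewrite w_eq cats0 count_nseq mul0n.
have zeros_w : zeros w = x + zeros v by rewrite w_eq count_cat count_nseq /= mul1n.
have ones_w : ones w = (ones v).+1 by rewrite w_eq count_cat count_nseq /= mul0n.
have [v01|/no01_shape [a [b v_eq]]] := boolP (subseq [:: false; true] v).
  have le_m : m <= ones v by rewrite -ltnS -ones_w.
  have := cnt_after_zeros_lt (i := i) (A := x) v01 _ le_m m_gt0 k_gt0.
  by rewrite -zeros_w -ones_w -w_eq -cnt_peak ltnn => /(_ peak_gt0).
move: cnt_gt0; rewrite w_eq v_eq; clear w_eq v_eq zeros_w ones_w.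
case: x => [|x].
  by rewrite -[true :: _]/(nseq a.+1 true ++ _) cnt_skip_ones // cnt_only_zeros.
case: b => [|b]; first by rewrite cats0 -[true :: _]/(nseq a.+1 true) cnt_zeros_then_ones.
by exists x.+1, a.+1, b.+1.
Qed.

End MaximalWords.

Lemma maximal_block3 c i m k w : 0 < i -> 0 < m -> 0 < k ->
  size (block3 c i m.+1 k) <= size w -> maximal (block3 c i m.+1 k) w ->
  exists x o y, [/\ 0 < x, 0 < o, 0 < y & w = block3 c x o y].
Proof.
move=> i_gt0 m_gt0 k_gt0; case: c; last exact: maximal_three_blocks.
move=> long_w /maximal_negb; rewrite block3_negb => w_max.
have [|x [o [y [x_gt0 o_gt0 y_gt0 w_eq]]]] := maximal_three_blocks i_gt0 m_gt0 k_gt0 _ w_max.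
  by rewrite size_map size_block3 -(size_block3 true).
by exists x, o, y; split => //; rewrite -(mapK negbK w) w_eq block3_negb.
Qed.

Lemma runs_aux_nseq (c : bool) n s k : runs_aux c k (nseq n c ++ s) = runs_aux c (k + n) s.
Proof. by elim: n k => [|n IH] k /=; rewrite ?addn0 // eqxx IH addnS. Qed.

Lemma runs_aux_switch (a b : bool) k s : a != b -> runs_aux a k (b :: s) = k :: runs_aux b 1 s.
Proof. by rewrite /= eq_sym => /negbTE ->. Qed.

Lemma runs_aux_neq_nil c k s : runs_aux c k s != [::].
Proof. by elim: s c k => [|y s IH] c k //=; case: ifP. Qed.

Lemma runs_block3 c x o y : 0 < x -> 0 < o -> 0 < y -> runs (block3 c x o y) = [:: x; o; y].
Proof.
case: x => // x _; case: o => // o _; case: y => // y _.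
have c_neq : c != ~~ c by case: c.
rewrite /block3 /= runs_aux_nseq runs_aux_switch // runs_aux_nseq runs_aux_switch 1?eq_sym //.
by rewrite -(cats0 (nseq y _)) runs_aux_nseq /= !add1n.
Qed.

Lemma nruns3_block3 p : nruns p = 3 ->
  exists c x o y, [/\ 0 < x, 0 < o, 0 < y & p = block3 c x o y].
Proof.
case: p => [|c p1] //; rewrite /nruns /=.
have c_neq : forall b : bool, b != ~~ b by case.
have [x1 [r1 [-> [->|[p2 ->]]]]] := split_first_run c p1; rewrite runs_aux_nseq //.
rewrite runs_aux_switch //=.
have [x2 [r2 [-> [->|[p3 ->]]]]] := split_first_run (~~ c) p2; rewrite runs_aux_nseq //.
rewrite runs_aux_switch //= negbK.
have [x3 [r3 [-> [->|[p4 ->]]]]] := split_first_run c p3; rewrite runs_aux_nseq.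
  by move=> _; exists c, x1.+1, x2.+1, x3.+1; rewrite cats0.
rewrite runs_aux_switch //=.
by case: (runs_aux _ _ p4) (runs_aux_neq_nil (~~ c) 1 p4).
Qed.

Theorem mainTheorem10 (p : seq bool) :
  nruns p = 3 -> 2 <= nth 0 (runs p) 1 ->
  forall (n : nat), size p <= n ->
  forall w : seq bool, size w = n -> optimal p w -> nruns w = 3.
Proof.
move=> p_runs3 mid_ge2 n long_w w size_w /optimal_maximal w_max; subst n.
have [c [i [o [k [i_gt0 o_gt0 k_gt0 p_eq]]]]] := nruns3_block3 p_runs3.
subst p; move: mid_ge2; rewrite runs_block3 //= {p_runs3}.
case: o {o_gt0} long_w w_max => [|m] // long_w w_max; rewrite ltnS => m_gt0.
have [x [o [y [x_gt0 o_gt0 y_gt0 ->]]]] := maximal_block3 i_gt0 m_gt0 k_gt0 long_w w_max.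
by rewrite /nruns runs_block3.
Qed.
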